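(* Suppose $k_{i_1\dots i_m}=\mathrm{sTr}(T_{i_1},\dots,T_{i_m})$ for a matrix representation $T_i$ of $\mathfrak g$. Then the form $\alpha$ of Proposition 4.1 equals $$\alpha=\frac{(2m-1)!}{((m-1)!)^2}\int_0^1dt\;\mathrm{Tr}\Big(\omega\big(tF+t(t-1)\,\omega^2\big)^{m-1}\Big),$$ and its gauged version $\widetilde\alpha$, obtained by replacing every $\omega$ by $\widetilde\omega=g^{-1}(d-A^\alpha L_\alpha)g=\omega-A$, is $$\widetilde\alpha=\frac{(2m-1)!}{((m-1)!)^2}\int_0^1dt\;\mathrm{Tr}\Big(\widetilde\omega\big(tF+t(t-1)\,\widetilde\omega^2\big)^{m-1}\Big).$$
   Context: $G$ is a simple compact simply connected matrix Lie group, $\omega=g^{-1}dg=\omega^iT_i$ its left-invariant Maurer–Cartan form, $\omega^2:=\omega\wedge\omega$ (matrix product), so $d\omega=-\omega^2$. $H\subset G$ is a Lie subgroup acting by right translations, with Lie algebra $\mathcal H$ spanned by $T_\alpha$ ($\alpha=1,\dots,\dim H$) among a basis $T_i$ of $\mathfrak g$; $F^\alpha$ are commuting degree-2 indeterminates, $F:=F^\alpha T_\alpha$, $A^\alpha$ are degree-1 generators, $A:=A^\alpha T_\alpha$. For matrix-valued forms $Y_1,\dots,Y_m$, $\mathrm{sTr}(Y_1,\dots,Y_m):=\frac1{m!}\sum_{\sigma\in S_m}\epsilon_\sigma\mathrm{Tr}(Y_{\sigma(1)}\cdots Y_{\sigma(m)})$ with $\epsilon_\sigma$ the Koszul sign from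 permuting odd-degree factors. With $\{\omega^i\}$ dual to $\{T_i\}$, $\Omega'_{(p)\,\alpha_1\dots\alpha_{p-1}}:=k_{\alpha_1\dots\alpha_{p-1}i_p\dots i_m}d\omega^{i_p}\wedge\dots\wedge d\omega^{i_{m-1}}\wedge\omega^{i_m}$, $\alpha_m(p):=\prod_{r=1}^{p-1}\frac{2m-r}{r}$, and $\alpha:=\sum_{p=1}^m\alpha_m(p)\,\Omega'_{(p)\,\alpha_1\dots\alpha_{p-1}}F^{\alpha_1}\cdots F^{\alpha_{p-1}}$. *)

(* Algebraic model: the identity lives in an arbitrary
   K-algebra containing odd (pairwise anticommuting) generators w^i (the
   Maurer-Cartan 1-forms), optionally odd A^alpha, and central F^alpha. *)
From HB Require Import structures.
From mathcomp Require Import all_boot all_order all_algebra.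
From mathcomp Require Import fingroup perm.
Set Implicit Arguments. Unset Strict Implicit. Unset Printing Implicit Defensive.
Import Order.TTheory GRing.Theory Num.Theory.
Local Open Scope ring_scope.

Section Defs.
Variables (K : numFieldType) (A : algType K) (n h N : nat).
Variables (e : 'I_h -> 'I_n) (c : 'I_n -> 'I_n -> 'I_n -> K)
          (T : 'I_n -> 'M[K]_N.+1).

Definition sTr (s : seq 'M[K]_N.+1) : K :=
  ((size s)`!%:R)^-1 * \sum_(p : 'S_(size s)) \tr (\prod_(j < size s) nth 0 s (p j)).

Definition kcoef (s : seq 'I_n) : K := sTr (map T s).

(* d w^i = -(w^2)^i = -1/2 c_{jk}^i w^j w^k   (Maurer-Cartan),
   with [T_j, T_k] = sum_i c j k i T_i *)
Definition dform (w : 'I_n -> A) (i : 'I_n) : A :=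
  - ((2%:R : K)^-1 *: \sum_j \sum_k (c j k i *: (w j * w k))).

Definition alpha_m (m p : nat) : K :=
  \prod_(1 <= r < p) ((2 * m - r)%:R / r%:R).

(* Omega'_{(p) a_1 .. a_{p-1}} = k_{a_1..a_{p-1} i_p .. i_m}
     dw^{i_p} ... dw^{i_{m-1}} w^{i_m}   (a = [a_1;..;a_{p-1}], p = size a + 1) *)
Definition Omega' (m p : nat) (w : 'I_n -> A) (a : seq 'I_h) : A :=
  \sum_(d : (m - p).-tuple 'I_n) \sum_(l : 'I_n)
     kcoef (map e a ++ d ++ [:: l]) *: ((\prod_(x <- d) dform w x) * w l).

Definition alpha (m : nat) (w : 'I_n -> A) (f : 'I_h -> A) : A :=
  \sum_(1 <= p < m.+1) alpha_m m p *:
     \sum_(a : (p.-1).-tuple 'I_h) (Omega' m p w a * \prod_(x <- a) f x).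

Definition mxw (w : 'I_n -> A) : 'M[A]_N.+1 :=
  \matrix_(i, j) \sum_k (T k i j *: w k).
Definition mxF (f : 'I_h -> A) : 'M[A]_N.+1 :=
  \matrix_(i, j) \sum_a (T (e a) i j *: f a).

(* int_0^1 dt of a polynomial in t with coefficients in A *)
Definition int01 (p : {poly A}) : A :=
  \sum_(i < size p) (((i.+1)%:R : K)^-1 *: p`_i).

Definition rhs (m : nat) (w : 'I_n -> A) (f : 'I_h -> A) : A :=
  let W : 'M[{poly A}]_N.+1 := map_mx polyC (mxw w) in
  let F : 'M[{poly A}]_N.+1 := map_mx polyC (mxF f) in
  let t : {poly A} := 'X in
  let M : 'M[{poly A}]_N.+1 := t%:M *m F + (t * (t - 1))%:M *m (W *m W) in
  let coef : K := ((2 * m).-1)`!%:R / (((m.-1)`!)%:R ^+ 2) in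
  coef *: int01 (\tr (W *m M ^+ m.-1)).

Definition gauged (w : 'I_n -> A) (a : 'I_h -> A) : 'I_n -> A :=
  fun i => w i - \sum_(b | e b == i) a b.

End Defs.

(* F^a and dw^i = -(w^2)^i are even, hence commute pairwise, so both sides
   are evaluations of identities between polynomials in commuting variables.
   Multilinearity of the symmetrized trace expands tr(T_l (tF + t(1-t) dw)^(m-1))
   binomially into the contractions k_{a.. i.. l} F^a.. dw^i.. of alpha, and the
   Beta integral int_0^1 t^(m-1) (1-t)^(m-1-q) dt converts the binomial
   coefficients, up to (2m-1)!/((m-1)!)^2, into alpha_m(q+1) = C(2m-1, q).
   On the matrix side, w^l commutes with even elements and can be pulled out
   of the trace, while t(t-1) w^2 = t(1-t) dw is the Maurer-Cartan equation
   for the representation T.  The gauged forms w - A still anticommute, so the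
   same argument applies to them. *)

From HB Require Import structures.
From mathcomp Require Import all_boot all_order all_algebra.
From mathcomp Require Import fingroup perm.
From mathcomp Require Import bigenough ring zify.
From mathcomp Require Import mpoly.
Import Order.TTheory GRing.Theory Num.Theory BigEnough.
Local Open Scope ring_scope.
Set Implicit Arguments. Unset Strict Implicit. Unset Printing Implicit Defensive.

Lemma prod_ord_cut (R : pzSemiRingType) m (G : 'I_m.+1 -> R) (p : 'I_m.+1) :
  \prod_(j < m.+1) G j =
  \prod_(0 <= k < p) G (inord k) * G p * \prod_(p.+1 <= k < m.+1) G (inord k).
Proof.
rewrite (eq_bigr (fun j : 'I_m.+1 => G (inord j))) => [|j _]; last by rewrite inord_val.
rewrite -(big_mkord xpredT (fun k => G (inord k))) (big_cat_nat _ (ltnW (ltn_ord p))) //=.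
by rewrite (big_ltn (ltn_ord p)) inord_val mulrA.
Qed.

Lemma sum_tuple0 (V : nmodType) (I : finType) (G : 0.-tuple I -> V) :
  \sum_(t : 0.-tuple I) G t = G [tuple].
Proof. by rewrite (big_pred1 [tuple]) // => t /=; rewrite [t]tuple0; apply/esym/eqP. Qed.

Lemma sum_tupleS (V : nmodType) (I : finType) L (G : L.+1.-tuple I -> V) :
  \sum_(t : L.+1.-tuple I) G t = \sum_x \sum_(t : L.-tuple I) G [tuple of x :: t].
Proof.
rewrite pair_big /= (reindex (fun p : I * L.-tuple I => [tuple of p.1 :: p.2])) //=.
exists (fun t : L.+1.-tuple I => (thead t, [tuple of behead t])).
  by move=> [x t] _; congr pair; apply: val_inj.
by move=> t _; rewrite [RHS]tuple_eta.
Qed.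

Lemma nseq_cat_cons (T : Type) k (x : T) s : nseq k x ++ x :: s = x :: nseq k x ++ s.
Proof. by elim: k => //= k ->. Qed.

Lemma natr_fact_neq0 (K : numFieldType) k : (k`!%:R : K) != 0.
Proof. by rewrite pnatr_eq0 -lt0n fact_gt0. Qed.

Lemma mulrn_inj (K : numFieldType) (R : pzRingType) (f : {rmorphism K -> R})
    k (x y : R) :
  (0 < k)%N -> x *+ k = y *+ k -> x = y.
Proof.
move=> k_gt0 /(congr1 (fun z => f (k%:R)^-1 * z)).
have fkK : f (k%:R)^-1 * k%:R = 1.
  by rewrite -(rmorph_nat f) -rmorphM mulVf ?rmorph1 // pnatr_eq0 -lt0n.
by rewrite -[x *+ k]mulr_natl -[y *+ k]mulr_natl !mulrA fkK !mul1r.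
Qed.

Lemma commrZ (K : numFieldType) (A : algType K) (x y : A) (k : K) :
  GRing.comm x y -> GRing.comm x (k *: y).
Proof. by move=> xy; rewrite /GRing.comm -scalerAr -scalerAl xy. Qed.

Section SymmetrizedTrace.
Variables (R : comNzRingType) (d : nat).
Local Notation M := 'M[R]_d.+1.

Definition symtr (s : seq M) : R :=
  \sum_(σ : 'S_(size s)) \tr (\prod_(j < size s) nth 0 s (σ j)).

Lemma symtrE m s : size s = m ->
  symtr s = \sum_(σ : 'S_m) \tr (\prod_(j < m) nth 0 s (σ j)).
Proof. by move=> <-. Qed.

Lemma perm_symtr s s' : perm_eq s s' -> symtr s = symtr s'.
Proof.
move=> pss'; rewrite [RHS](@symtrE (size s)); last by rewrite (perm_size pss').
have /tuple_permP[τ def_s'] : perm_eq s' (in_tuple s) by rewrite perm_sym.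
rewrite /symtr (reindex_inj (mulIg τ)); apply: eq_bigr => σ _.
congr (\tr _); apply: eq_bigr => j _.
by rewrite def_s' permM -(tnth_nth 0 (mktuple _)) tnth_mktuple (tnth_nth 0).
Qed.

Section Slot.
Variables (P S : seq M).
Local Notation m := (size P + size S)%N.

(* Multilinearity is read off at the slot between P and S: in the term of
   sigma the slot entry sits at position slot_pos sigma of the product. *)
Definition slot_pos (σ : 'S_m.+1) : 'I_m.+1 := (σ^-1)%g (inord (size P)).
Definition slot_nth (i : nat) : M := nth 0 (P ++ 0 :: S) i.
Definition slot_left (σ : 'S_m.+1) : M :=
  \prod_(0 <= k < slot_pos σ) slot_nth (σ (inord k)).
Definition slot_right (σ : 'S_m.+1) : M :=
  \prod_((slot_pos σ).+1 <= k < m.+1) slot_nth (σ (inord k)).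

Lemma nth_cat_cons_neq X Y i : i != size P ->
  nth 0 (P ++ X :: S) i = nth 0 (P ++ Y :: S) i.
Proof.
move=> iNP; rewrite !nth_cat; case: ltnP => // le_P_i.
case E: (i - size P)%N => [|j] //=.
by move: iNP; rewrite eqn_leq le_P_i andbT -subn_eq0 E.
Qed.

Lemma slot_pos_neq (σ : 'S_m.+1) k : (k < m.+1)%N -> k != slot_pos σ ->
  val (σ (inord k)) != size P.
Proof.
move=> lt_k kNpos; apply/eqP => E.
have : σ (inord k) = inord (size P).
  by apply: val_inj; rewrite /= E inordK // ltnS leq_addr.
move/(congr1 (σ^-1)%g); rewrite permK -/(slot_pos σ) => E2.
by move: kNpos; rewrite -E2 inordK // eqxx.
Qed.

Lemma symtr_slot X :
  symtr (P ++ X :: S) = \sum_(σ : 'S_m.+1) \tr (slot_left σ * X * slot_right σ).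
Proof.
rewrite (@symtrE m.+1); last by rewrite size_cat /= addnS.
apply: eq_bigr => σ _; congr (\tr _).
rewrite (@prod_ord_cut _ m _ (slot_pos σ)); congr (_ * _ * _).
- apply: eq_big_nat => k /andP[_ lt_k]; apply: nth_cat_cons_neq.
  by apply: slot_pos_neq; [exact: ltn_trans lt_k _ | rewrite neq_ltn lt_k].
- by rewrite /slot_pos permKV inordK ?ltnS ?leq_addr // nth_cat ltnn subnn.
- apply: eq_big_nat => k /andP[lt_k lt_km]; apply: nth_cat_cons_neq.
  by apply: slot_pos_neq; rewrite // neq_ltn lt_k orbT.
Qed.

Lemma symtr_slotD X Y :
  symtr (P ++ (X + Y) :: S) = symtr (P ++ X :: S) + symtr (P ++ Y :: S).
Proof.
rewrite !symtr_slot -big_split; apply: eq_bigr => σ _.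
by rewrite mulrDr mulrDl raddfD.
Qed.

Lemma symtr_slotZ c X : symtr (P ++ (c *: X) :: S) = c * symtr (P ++ X :: S).
Proof.
rewrite !symtr_slot mulr_sumr; apply: eq_bigr => σ _.
by rewrite -scalerAr -scalerAl mxtraceZ.
Qed.

Lemma symtr_slot_sum (I : finType) (z : I -> R) (F : I -> M) :
  symtr (P ++ (\sum_x z x *: F x) :: S) = \sum_x z x * symtr (P ++ F x :: S).
Proof.
rewrite symtr_slot.
under [RHS]eq_bigr do rewrite symtr_slot mulr_sumr.
rewrite [RHS]exchange_big; apply: eq_bigr => σ _.
rewrite mulr_sumr mulr_suml raddf_sum; apply: eq_bigr => x _ /=.
by rewrite -scalerAr -scalerAl mxtraceZ.
Qed.

End Slot.

Lemma symtr_nseqZ c U q P S :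
  symtr (P ++ nseq q (c *: U) ++ S) = c ^+ q * symtr (P ++ nseq q U ++ S).
Proof.
elim: q P => [|q IH] P; first by rewrite mul1r.
by rewrite /= symtr_slotZ -!cat_rcons IH mulrA -exprS.
Qed.

Lemma symtr_sum_tuple (I : finType) (z : I -> R) (F : I -> M) L P S :
  \sum_(t : L.-tuple I) (\prod_(x <- t) z x) * symtr (P ++ map F t ++ S) =
  symtr (P ++ nseq L (\sum_x z x *: F x) ++ S).
Proof.
elim: L P => [|L IH] P; first by rewrite sum_tuple0 big_nil mul1r.
rewrite sum_tupleS /= symtr_slot_sum; apply: eq_bigr => x _.
rewrite -cat_rcons -IH mulr_sumr; apply: eq_bigr => t _.
by rewrite big_cons mulrA cat_rcons.
Qed.

Lemma symtr_nseqD U V L S :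
  symtr (nseq L (U + V) ++ S) =
  \sum_(0 <= q < L.+1) symtr (nseq q U ++ nseq (L - q) V ++ S) *+ 'C(L, q).
Proof.
elim: L S => [|L IH] S; first by rewrite big_nat1 mulr1n.
have -> : symtr (nseq L.+1 (U + V) ++ S) = symtr (nseq L (U + V) ++ (U + V) :: S).
  by apply: perm_symtr; rewrite /= -cat1s perm_catCA.
set G := fun q r => symtr (nseq q U ++ nseq r V ++ S).
have splitUV q : symtr (nseq q U ++ nseq (L - q) V ++ (U + V) :: S) =
    G q.+1 (L - q)%N + G q (L - q).+1.
  rewrite catA symtr_slotD -catA; congr (_ + _).
    by apply: perm_symtr; rewrite /= catA -cat1s perm_catCA /= -catA.
  by rewrite -catA nseq_cat_cons.
rewrite IH; under eq_bigr do rewrite splitUV mulrnDl.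
rewrite big_split /= [in RHS]big_nat_recl //= bin0 mulr1n.
have -> : \sum_(0 <= i < L.+1) G i.+1 (L.+1 - i.+1)%N *+ 'C(L.+1, i.+1) =
    \sum_(0 <= i < L.+1) G i.+1 (L - i)%N *+ 'C(L, i.+1) +
    \sum_(0 <= i < L.+1) G i.+1 (L - i)%N *+ 'C(L, i).
  by rewrite -big_split; apply: eq_bigr => i _; rewrite binS mulrnDr.
rewrite addrA addrC; congr (_ + _).
rewrite big_nat_recl // bin0 mulr1n subn0 big_nat_recr //= bin_small // mulr0n addr0.
congr (_ + _); apply: eq_big_nat => i /andP[_ lt_iL].
by rewrite /G -(subnSK lt_iL).
Qed.

(* Each product is [Z]^L with one [T] inserted; cyclicity of the trace moves
   [T] to the front, and all (L+1)! permutations contribute the same. *)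
Lemma symtr_nseq_rcons Z T L :
  symtr (rcons (nseq L Z) T) = \tr (T * Z ^+ L) *+ L.+1`!.
Proof.
rewrite -cats1 (symtr_slot (nseq L Z) [::] T).
set m := (size (nseq L Z) + size ([::] : seq M))%N.
have size_m : m = L by rewrite /m size_nseq addn0.
have slot_nthZ (σ : 'S_m.+1) k : (k < m.+1)%N -> k != slot_pos σ ->
    slot_nth (nseq L Z) [::] (σ (inord k)) = Z.
  move=> lt_k kNpos.
  have σkNL : nat_of_ord (σ (inord k)) != L.
    apply: contra (slot_pos_neq lt_k kNpos) => /eqP E.
    by apply/eqP/(etrans E); rewrite size_nseq.
  have : (nat_of_ord (σ (inord k)) < L)%N.
    by rewrite ltn_neqAle σkNL -ltnS (leq_trans (ltn_ord _)) // size_m.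
  rewrite /slot_nth; move: (nat_of_ord _) => v lt_v.
  by rewrite nth_cat size_nseq lt_v nth_nseq lt_v.
have termE (σ : 'S_m.+1) : \tr (slot_left σ * T * slot_right σ) = \tr (T * Z ^+ L).
  rewrite /slot_left /slot_right -/m.
  rewrite (eq_big_nat _ _ (F2 := fun=> Z)) => [|k /andP[_ lt_k]]; last first.
    by apply: slot_nthZ; [exact: ltn_trans lt_k _ | rewrite neq_ltn lt_k].
  rewrite [X in _ * X](eq_big_nat _ _ (F2 := fun=> Z)) => [|k /andP[lt_k ?]]; last first.
    by apply: slot_nthZ; rewrite // neq_ltn lt_k orbT.
  rewrite !prodr_const_nat subn0 -!mulmxE mxtrace_mulC mulmxA !mulmxE -exprD.
  rewrite -mulmxE mxtrace_mulC mulmxE subSS subnK -?size_m //.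
  by rewrite -ltnS.
by rewrite (eq_bigr _ (fun σ _ => termE σ)) sumr_const card_Sn size_m.
Qed.

End SymmetrizedTrace.

Section Int01.
Variables (K : numFieldType) (A : algType K).

Lemma int01E (p : {poly A}) L : (size p <= L)%N ->
  int01 p = \sum_(i < L) (((i.+1)%:R : K)^-1 *: p`_i).
Proof.
move=> le_pL; rewrite /int01 (big_ord_widen L (fun i => ((i.+1)%:R : K)^-1 *: p`_i)) //.
rewrite big_mkcond; apply: eq_bigr => i _; case: ltnP => // le_p_i.
by rewrite nth_default // scaler0.
Qed.

Lemma int01_is_zmod_morphism : zmod_morphism (@int01 K A).
Proof.
move=> p q; set L := (size p + size q)%N.
rewrite (@int01E (p - q) L); last first.
  by rewrite (leq_trans (size_polyD _ _)) // size_polyN geq_max leq_addr leq_addl.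
rewrite (@int01E p L) ?leq_addr // (@int01E q L) ?leq_addl // -sumrB.
by apply: eq_bigr => i _; rewrite coefB scalerBr.
Qed.

HB.instance Definition _ :=
  GRing.isZmodMorphism.Build {poly A} A (@int01 K A) int01_is_zmod_morphism.

Lemma int01_mulC (c : A) p : int01 (c%:P * p) = c * int01 p.
Proof.
rewrite (@int01E _ (size p)); last by rewrite mul_polyC size_scale_leq.
by rewrite /int01 mulr_sumr; apply: eq_bigr => i _; rewrite coefCM scalerAr.
Qed.

Lemma int01Xn k : int01 ('X^k : {poly A}) = (((k.+1)%:R : K)^-1)%:A.
Proof.
rewrite (@int01E _ k.+1) ?size_polyXn // big_ord_recr /= big1 ?add0r.
  by rewrite coefXn eqxx.
by move=> i _; rewrite coefXn (ltn_eqF (ltn_ord i)) scaler0.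
Qed.

End Int01.

Lemma int01_map (K : numFieldType) (U V : algType K) (f : {linear U -> V}) q :
  int01 (map_poly f q) = f (int01 q).
Proof.
rewrite (@int01E _ _ _ (size q)); last first.
  by rewrite map_polyE (leq_trans (size_Poly _)) ?size_map.
by rewrite /int01 raddf_sum; apply: eq_bigr => i _; rewrite coef_map; exact/esym/linearZ.
Qed.

Lemma int01_beta (K : numFieldType) (C : comAlgType K) a b :
  int01 ('X^a * (1 - 'X) ^+ b : {poly C}) =
  (a`!%:R * b`!%:R / (a + b).+1`!%:R : K)%:A.
Proof.
elim: b a => [|b IH] a.
  rewrite mulr1 int01Xn addn0 fact0 mulr1 factS natrM.
  by congr (_%:A); field; rewrite natr_fact_neq0 addrC natr1 pnatr_eq0.
have -> : ('X^a * (1 - 'X) ^+ b.+1 : {poly C}) =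
    'X^a * (1 - 'X) ^+ b - 'X^(a.+1) * (1 - 'X) ^+ b.
  by rewrite exprS exprSr; ring.
rewrite raddfB /= !IH -scalerBl addSn addnS !factS !natrM; congr (_ *: _).
have h1 := natr_fact_neq0 K a; have h2 := natr_fact_neq0 K b.
have h3 := natr_fact_neq0 K (a + b).
have h4 : ((a + b).+1%:R : K) != 0 by rewrite pnatr_eq0.
have h5 : ((a + b).+2%:R : K) != 0 by rewrite pnatr_eq0.
by rewrite -!natr1 in h4 h5 *; field; rewrite h3 -natrD h4 h5.
Qed.

Lemma alpha_m_binom (K : numFieldType) L q :
  alpha_m K L.+1 q.+1 = 'C((2 * L).+1, q)%:R.
Proof.
elim: q => [|q IH]; first by rewrite /alpha_m big_geq.
rewrite /alpha_m big_nat_recr //= -/(alpha_m K L.+1 q.+1) IH.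
apply: (mulIf (_ : (q.+1%:R : K) != 0)); first by rewrite pnatr_eq0.
rewrite -mulrA mulfVK ?pnatr_eq0 // -!natrM [in RHS]mulnC mul_bin_left mulnC.
by congr (_ * _)%:R; lia.
Qed.

(* The normalization (2m-1)!/((m-1)!)^2 of the theorem turns the Beta integral
   arising from the [q]-th binomial term back into alpha_m(q+1). *)
Lemma alpha_m_beta (K : numFieldType) L q : (q <= L)%N ->
  alpha_m K L.+1 q.+1 =
  (((2 * L.+1).-1)`!%:R / ((L.+1.-1)`!%:R ^+ 2)) *
  ('C(L, q)%:R * (L`!%:R * (L - q)`!%:R / ((L + (L - q)).+1)`!%:R)).
Proof.
move=> le_qL; rewrite alpha_m_binom.
have -> : (2 * L.+1).-1 = (2 * L).+1 by rewrite mulnS.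
have -> : (L + (L - q)).+1 = ((2 * L).+1 - q)%N by lia.
have binE n k : (k <= n)%N -> ('C(n, k)%:R : K) = n`!%:R / (k`!%:R * (n - k)`!%:R).
  move=> le_kn; rewrite -(bin_fact le_kn) !natrM mulfK //.
  by rewrite mulf_neq0 ?natr_fact_neq0.
rewrite !binE //; last by lia.
have := natr_fact_neq0 K q; have := natr_fact_neq0 K (L - q).
have := natr_fact_neq0 K L; have := natr_fact_neq0 K ((2 * L).+1 - q).
by move=> *; field; apply/and4P.
Qed.

Section CommutativeIdentity.
Variables (K : numFieldType) (C : comAlgType K) (n h N : nat)
  (e : 'I_h -> 'I_n) (T : 'I_n -> 'M[K]_N.+1).
Local Notation B := {poly C}.

Definition iotaC : {rmorphism K -> B} := polyC \o in_alg C.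
Definition TB i : 'M[B]_N.+1 := map_mx iotaC (T i).

Lemma kcoef_symtr (s : seq 'I_n) : iotaC (kcoef T s) *+ (size s)`! = symtr (map TB s).
Proof.
rewrite /kcoef /sTr /symtr !size_map -mulr_natl -(rmorph_nat iotaC) -rmorphM.
rewrite mulrA mulfV ?natr_fact_neq0 // mul1r rmorph_sum; apply: eq_bigr => σ _.
rewrite -trace_map_mx rmorph_prod; congr (\tr _); apply: eq_bigr => j _.
have -> : map TB s = map (map_mx iotaC) (map T s) by rewrite -map_comp.
by rewrite (nth_map 0) ?size_map.
Qed.

Section Contraction.
Variables (X : 'I_h -> C) (Y : 'I_n -> C) (L : nat) (l : 'I_n).

Definition FB : 'M[B]_N.+1 := map_mx polyC (mxF e T X).
Definition DB : 'M[B]_N.+1 := map_mx polyC (mxw T Y).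

Lemma polyC_scale (k : K) (x : C) : (k *: x)%:P = x%:P * iotaC k.
Proof. by rewrite /= -polyCM mulr_algr. Qed.

Lemma FB_sum : FB = \sum_a (X a)%:P *: TB (e a).
Proof.
apply/matrixP => i j; rewrite !mxE summxE rmorph_sum; apply: eq_bigr => a _.
by rewrite !mxE; exact: polyC_scale.
Qed.

Lemma DB_sum : DB = \sum_k (Y k)%:P *: TB k.
Proof.
apply/matrixP => i j; rewrite !mxE summxE rmorph_sum; apply: eq_bigr => k _.
by rewrite !mxE; exact: polyC_scale.
Qed.

(* The (q+1)-th summand of alpha, with X a standing for F^a and Y i for dw^i. *)
Definition kcontract q : C :=
  \sum_(a : q.-tuple 'I_h) \sum_(d : (L - q).-tuple 'I_n)
     kcoef T (map e a ++ d ++ [:: l]) *: (\prod_(x <- d) Y x * \prod_(x <- a) X x).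

Lemma symtr_kcontract q : (q <= L)%N ->
  symtr (nseq q FB ++ nseq (L - q) DB ++ [:: TB l]) = (kcontract q)%:P *+ L.+1`!.
Proof.
move=> le_qL; rewrite FB_sum -[nseq q _ ++ _]cat0s -symtr_sum_tuple.
rewrite /kcontract rmorph_sum -sumrMnl; apply: eq_bigr => a _.
rewrite DB_sum -symtr_sum_tuple mulr_sumr rmorph_sum -sumrMnl; apply: eq_bigr => d _.
have -> : [seq TB (e x) | x <- a] ++ [seq TB i | i <- d] ++ [:: TB l] =
    map TB (map e a ++ d ++ [:: l]) by rewrite !map_cat -map_comp.
rewrite -kcoef_symtr !size_cat size_map !size_tuple /= addn1 addnS subnKC //.
rewrite !mulrnAr -!rmorph_prod -!rmorphM; congr (_%:P *+ _).
by rewrite mulrA mulrC mulr_algl [_ * _]mulrC.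
Qed.

Definition alpha_coef : C :=
  \sum_(1 <= p < L.+2) alpha_m K L.+1 p *:
     \sum_(a : (p.-1).-tuple 'I_h) \sum_(d : (L.+1 - p).-tuple 'I_n)
       kcoef T (map e a ++ d ++ [:: l]) *: (\prod_(x <- d) Y x * \prod_(x <- a) X x).

Definition rhs_coef : C :=
  (((2 * L.+1).-1)`!%:R / ((L.+1.-1)`!%:R ^+ 2) : K) *:
     int01 (\tr (TB l *m ('X%:M *m FB + ('X * (1 - 'X))%:M *m DB) ^+ L)).

(* After expanding tr(T_l (tF + t(1-t) dw)^L) binomially, the [q]-th term
   integrates to a Beta integral, see alpha_m_beta. *)
Lemma alpha_coef_rhs_coef : alpha_coef = rhs_coef.
Proof.
rewrite /alpha_coef /rhs_coef; set Mx := ('X%:M *m FB + _).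
have trE : \tr (TB l *m Mx ^+ L) = \sum_(0 <= q < L.+1)
    ('X^q * ('X * (1 - 'X)) ^+ (L - q) * (kcontract q)%:P) *+ 'C(L, q).
  apply: (mulrn_inj iotaC (fact_gt0 L.+1)).
  rewrite mulmxE -symtr_nseq_rcons -cats1 /Mx !mul_scalar_mx symtr_nseqD -sumrMnl.
  apply: eq_big_nat => q /andP[_ lt_qL].
  rewrite -[nseq q _ ++ _]cat0s symtr_nseqZ /= symtr_nseqZ symtr_kcontract //.
  by rewrite !mulrnAr -!mulrnA mulnC mulrA.
rewrite trE [int01 _]raddf_sum scaler_sumr big_add1 /=.
apply: eq_big_nat => q /andP[_ lt_qL].
rewrite raddfMn /=.
have -> : 'X^q * ('X * (1 - 'X)) ^+ (L - q) * (kcontract q)%:P =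
    (kcontract q)%:P * ('X^L * (1 - 'X) ^+ (L - q)) :> B.
  by rewrite exprMn mulrA -exprD subnKC //; ring.
rewrite int01_mulC int01_beta mulr_algr scalerMnl scalerA (@alpha_m_beta K L q) //.
by rewrite [_%:R * (_ * _ / _)]mulr_natl.
Qed.

End Contraction.
End CommutativeIdentity.

Section CommutingEvaluation.
Variables (K : numFieldType) (A : algType K) (r : nat) (g : 'I_r -> A).
Hypothesis g_comm : forall i j, g i * g j = g j * g i.

Lemma mmap1D_comm m1 m2 : mmap1 g (m1 + m2)%MM = mmap1 g m1 * mmap1 g m2.
Proof.
rewrite /mmap1 -prodrM_comm => [|i j _ _]; last exact/commrX/commr_sym/commrX/g_comm.
by apply: eq_bigr => i _; rewrite mnmDE exprD.
Qed.

(* The library proves mmap multiplicative only for central generators. *)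
Definition mpeval (p : {mpoly K[r]}) : A := mmap (in_alg A) g p.

Lemma mpeval_is_monoid_morphism : monoid_morphism mpeval.
Proof.
split=> [|p q].
  by rewrite /mpeval /mmap msupp1 big_seq1 mpolyCK rmorph1 mul1r mmap11.
rewrite /mpeval; pose_big_enough i.
  rewrite (mpolywME (k := i)) // raddf_sum /= !(mmapE i) //.
  rewrite big_distrlr /= pair_bigA; apply/eq_bigr => -[j1 j2] _ /=.
  rewrite mmapZ mmapX mmap1D_comm /= !mulr_algl.
  by rewrite -!scalerAl -!scalerAr scalerA.
by close.
Qed.

End CommutingEvaluation.

Section Transfer.
Variables (K : numFieldType) (A : algType K) (n h N : nat) (e : 'I_h -> 'I_n)
  (c : 'I_n -> 'I_n -> 'I_n -> K) (T : 'I_n -> 'M[K]_N.+1)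
  (w : 'I_n -> A) (f : 'I_h -> A).
Hypothesis w_anti : forall i j, w i * w j = - (w j * w i).
Hypothesis f_central : forall b x, f b * x = x * f b.
Hypothesis T_rep : forall i j, T i *m T j - T j *m T i = \sum_k c i j k *: T k.

Local Notation dw := (dform c w).

Lemma commr_dform x i : (forall p q, GRing.comm x (w p * w q)) -> GRing.comm x (dw i).
Proof.
move=> x_ww; apply/commrN/commrZ.
by apply: commr_sum => p _; apply: commr_sum => q _; apply/commrZ/x_ww.
Qed.

Lemma commr_w_dform l i : GRing.comm (w l) (dw i).
Proof.
apply: commr_dform => p q.
by rewrite /GRing.comm mulrA (w_anti l p) mulNr -!mulrA (w_anti l q) mulrN opprK.
Qed.

Lemma commr_dform_dform i j : GRing.comm (dw i) (dw j).
Proof. by apply: commr_dform => p q; apply/commrM; apply/commr_sym/commr_w_dform. Qed.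

Lemma sum_ww_antisym (M : 'I_n -> 'I_n -> K) :
  \sum_p \sum_q M p q *: (w p * w q) =
  (2%:R : K)^-1 *: \sum_p \sum_q (M p q - M q p) *: (w p * w q).
Proof.
set S := LHS.
have -> : \sum_p \sum_q (M p q - M q p) *: (w p * w q) = S + S.
  transitivity (S - \sum_p \sum_q M q p *: (w p * w q)).
    rewrite /S -sumrB; apply: eq_bigr => p _; rewrite -sumrB.
    by apply: eq_bigr => q _; rewrite scalerBl.
  suff -> : \sum_p \sum_q M q p *: (w p * w q) = - S by rewrite opprK.
  rewrite exchange_big -sumrN; apply: eq_bigr => p _.
  by rewrite -sumrN; apply: eq_bigr => q _; rewrite w_anti scalerN.
by rewrite -mulr2n -scaler_nat scalerA mulVf ?pnatr_eq0 // scale1r.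
Qed.

Lemma mxw_mulmxE (u v : 'I_n -> A) i j :
  (mxw T u *m mxw T v) i j = \sum_p \sum_q (T p *m T q) i j *: (u p * v q).
Proof.
rewrite !mxE; under eq_bigr => k _ do rewrite !mxE mulr_suml.
rewrite exchange_big; apply: eq_bigr => p _.
under eq_bigr => k _ do rewrite mulr_sumr.
rewrite exchange_big; apply: eq_bigr => q _; rewrite mxE scaler_suml.
by apply: eq_bigr => k _; rewrite -scalerAl -scalerAr scalerA.
Qed.

Lemma mxw_sq : mxw T w *m mxw T w = - mxw T dw.
Proof.
apply/matrixP => i j; rewrite mxw_mulmxE sum_ww_antisym !mxE /dform -sumrN.
under [RHS]eq_bigr => r _ do rewrite scalerN opprK scalerA mulrC -scalerA scaler_sumr.
rewrite -scaler_sumr; congr (_ *: _); rewrite [RHS]exchange_big; apply: eq_bigr => p _.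
under [RHS]eq_bigr => r _ do rewrite scaler_sumr.
rewrite [RHS]exchange_big; apply: eq_bigr => q _.
under [RHS]eq_bigr => r _ do rewrite scalerA.
rewrite -scaler_suml; congr (_ *: _).
have := congr1 (fun M : 'M[K]_N.+1 => M i j) (T_rep p q); rewrite !mxE => ->.
by rewrite summxE; apply: eq_bigr => r _; rewrite mxE mulrC.
Qed.

Definition even_gen (j : 'I_(h + n)) : A :=
  match split j with inl a => f a | inr i => dw i end.

Lemma even_gen_comm i j : even_gen i * even_gen j = even_gen j * even_gen i.
Proof.
rewrite /even_gen; case: (split i) => [a|a]; case: (split j) => [b|b].
- exact: f_central.
- exact: f_central.
- exact/esym/f_central.
- exact: commr_dform_dform.
Qed.

Local Notation C := {mpoly K[h + n]}.

(* The commutative subalgebra generated by the F^a and dw^i, presented as the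
   image of polynomials in the variables Fvar a and dwvar i. *)
Definition ev : C -> A := mpeval even_gen.
Definition Fvar (a : 'I_h) : C := 'X_(lshift n a).
Definition dwvar (i : 'I_n) : C := 'X_(rshift h i).

Lemma ev_is_zmod_morphism : zmod_morphism ev.
Proof. by move=> p q; rewrite /ev /mpeval raddfB. Qed.

Lemma evZ : scalable ev.
Proof. by move=> k p; rewrite /ev /mpeval mmapZ /= mulr_algl. Qed.

HB.instance Definition _ := GRing.isZmodMorphism.Build C A ev ev_is_zmod_morphism.
HB.instance Definition _ :=
  GRing.isMonoidMorphism.Build C A ev (mpeval_is_monoid_morphism even_gen_comm).
HB.instance Definition _ := GRing.isScalable.Build K C A *:%R ev evZ.

Lemma ev_alg k : ev k%:A = k%:A.
Proof. by rewrite evZ rmorph1. Qed.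

Lemma ev_Fvar a : ev (Fvar a) = f a.
Proof.
by rewrite /ev /mpeval mmapX mmap1U /even_gen -[lshift n a]/(unsplit (inl a)) unsplitK.
Qed.

Lemma ev_dwvar i : ev (dwvar i) = dw i.
Proof.
by rewrite /ev /mpeval mmapX mmap1U /even_gen -[rshift h i]/(unsplit (inr i)) unsplitK.
Qed.

Lemma commr_w_ev l x : GRing.comm (w l) (ev x).
Proof.
rewrite /ev /mpeval /mmap; apply: commr_sum => m _; apply: commrM.
  by rewrite /GRing.comm /GRing.in_alg /= mulr_algl mulr_algr.
apply: commr_prod => i _; apply: commrX; rewrite /even_gen; case: (split i) => [a|a].
  exact/esym/f_central.
exact: commr_w_dform.
Qed.

Lemma alpha_ev L : alpha e c T L.+1 w f = \sum_l ev (alpha_coef e T Fvar dwvar L l) * w l.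
Proof.
have prodF_central (a : seq 'I_h) x : \prod_(y <- a) f y * x = x * \prod_(y <- a) f y.
  by apply/esym/commr_prod => y _; exact/esym/f_central.
rewrite /alpha /alpha_coef.
under [RHS]eq_bigr => l _ do rewrite rmorph_sum mulr_suml.
rewrite [RHS]exchange_big; apply: eq_big_nat => p _.
under [RHS]eq_bigr => l _ do rewrite /= evZ -scalerAl.
rewrite -scaler_sumr; congr (_ *: _).
under [RHS]eq_bigr => l _ do rewrite rmorph_sum mulr_suml.
rewrite [RHS]exchange_big; apply: eq_bigr => a _.
rewrite /Omega' mulr_suml.
under [RHS]eq_bigr => l _ do rewrite rmorph_sum mulr_suml.
rewrite [RHS]exchange_big; apply: eq_bigr => d _.
rewrite mulr_suml; apply: eq_bigr => l _.
rewrite /= evZ rmorphM !rmorph_prod /=.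
under [in RHS]eq_bigr => x _ do rewrite /= ev_dwvar.
have -> : \prod_(i <- a) ev (Fvar i) = \prod_(i <- a) f i.
  by apply: eq_bigr => i _; exact: ev_Fvar.
by rewrite -!scalerAl -!mulrA prodF_central.
Qed.

Local Notation Phi := (map_poly ev).
Local Notation W := (map_mx polyC (mxw T w)).

Lemma map_FB : map_mx Phi (FB e T Fvar) = map_mx polyC (mxF e T f).
Proof.
apply/matrixP => i j; rewrite !mxE map_polyC; congr _%:P.
by rewrite raddf_sum; apply: eq_bigr => a _; rewrite /= evZ ev_Fvar.
Qed.

Lemma map_DB : map_mx Phi (DB T dwvar) = map_mx polyC (mxw T dw).
Proof.
apply/matrixP => i j; rewrite !mxE map_polyC; congr _%:P.
by rewrite raddf_sum; apply: eq_bigr => k _; rewrite /= evZ ev_dwvar.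
Qed.

Lemma map_tF_dw :
  map_mx Phi ('X%:M *m FB e T Fvar + ('X * (1 - 'X))%:M *m DB T dwvar) =
  'X%:M *m map_mx polyC (mxF e T f) + ('X * ('X - 1))%:M *m (W *m W).
Proof.
have Phi_t1t : Phi ('X * (1 - 'X)) = 'X * (1 - 'X).
  by rewrite rmorphM rmorphB rmorph1; congr (_ * (1 - _)); exact: map_polyX.
rewrite map_mxD !map_mxM !map_scalar_mx map_FB map_DB /= map_polyX Phi_t1t.
rewrite -map_mxM mxw_sq map_mxN !mul_scalar_mx scalerN -scaleNr.
by rewrite -mulrN opprB.
Qed.

Lemma mxw_polyC_sum : W = \sum_l (w l)%:P *: map_mx Phi (TB C T l).
Proof.
apply/matrixP => i j; rewrite !mxE summxE rmorph_sum; apply: eq_bigr => k _.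
rewrite !mxE -mulr_algr rmorphM /= map_polyC; congr (_ * _%:P).
exact/esym/ev_alg.
Qed.

Lemma rhs_ev L : rhs e T L.+1 w f = \sum_l w l * ev (rhs_coef e T Fvar dwvar L l).
Proof.
rewrite /rhs /rhs_coef /= -map_tF_dw {1}mxw_polyC_sum mulmx_suml.
set P := 'X%:M *m FB e T Fvar + _.
have -> : map_mx Phi P ^+ L = map_mx Phi (P ^+ L) by rewrite rmorphXn.
rewrite [\tr _]raddf_sum [int01 _]raddf_sum scaler_sumr; apply: eq_bigr => l _ /=.
rewrite -scalemxAl mxtraceZ -map_mxM trace_map_mx.
by rewrite int01_mulC int01_map scalerAr -evZ.
Qed.

Lemma alpha_eq_rhs m : (0 < m)%N -> alpha e c T m w f = rhs e T m w f.
Proof.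
case: m => // L _; rewrite alpha_ev rhs_ev; apply: eq_bigr => l _.
by rewrite alpha_coef_rhs_coef commr_w_ev.
Qed.

End Transfer.

Section Anticommutation.
Variable R : pzRingType.

Definition anticomm (x y : R) := x * y = - (y * x).

Lemma anticomm_sym x y : anticomm x y -> anticomm y x.
Proof. by rewrite /anticomm => ->; rewrite opprK. Qed.

Lemma anticommBl x y z : anticomm x z -> anticomm y z -> anticomm (x - y) z.
Proof. by rewrite /anticomm mulrBl mulrBr => -> ->; rewrite opprD. Qed.

Lemma anticomm_suml (I : Type) (r : seq I) (P : pred I) (F : I -> R) z :
  (forall i, P i -> anticomm (F i) z) -> anticomm (\sum_(i <- r | P i) F i) z.
Proof.
move=> Fz; rewrite /anticomm mulr_suml mulr_sumr -sumrN.
by apply: eq_bigr => i /Fz.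
Qed.

End Anticommutation.

Lemma gauged_anticomm (K : numFieldType) (A : algType K) (n h : nat)
    (e : 'I_h -> 'I_n) (w : 'I_n -> A) (a : 'I_h -> A) :
  (forall i j, anticomm (w i) (w j)) ->
  (forall b b', anticomm (a b) (a b')) ->
  (forall i b, anticomm (w i) (a b)) ->
  forall i j, anticomm (gauged e w a i) (gauged e w a j).
Proof.
move=> ww aa wa i j.
apply: anticommBl; apply: anticomm_sym; apply: anticommBl.
- exact: ww.
- by apply: anticomm_suml => b _; apply/anticomm_sym/wa.
- by apply/anticomm_sym/anticomm_suml => b _; apply/anticomm_sym/wa.
- apply: anticomm_suml => b _; apply/anticomm_sym/anticomm_suml => b' _.
  exact: aa.
Qed.

Theorem mainTheorem4 (K : numFieldType) (A : algType K) (n h N m : nat)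
    (e : 'I_h -> 'I_n) (c : 'I_n -> 'I_n -> 'I_n -> K)
    (T : 'I_n -> 'M[K]_N.+1)
    (w : 'I_n -> A) (a : 'I_h -> A) (f : 'I_h -> A) :
  (0 < m)%N ->
  injective e ->
  (* c are the structure constants of the Lie algebra g *)
  (forall i j k, c i j k = - c j i k) ->
  (forall i j k l, \sum_s (c i j s * c s k l + c j k s * c s i l
                           + c k i s * c s j l) = 0) ->
  (* T is a matrix representation of g *)
  (forall i j, T i *m T j - T j *m T i = \sum_k c i j k *: T k) ->
  (* w^i, A^a odd (anticommuting), F^a central even *)
  (forall i j, w i * w j = - (w j * w i)) ->
  (forall b b', a b * a b' = - (a b' * a b)) ->
  (forall i b, w i * a b = - (a b * w i)) ->
  (forall b x, f b * x = x * f b) ->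
  alpha e c T m w f = rhs e T m w f /\
  alpha e c T m (gauged e w a) f = rhs e T m (gauged e w a) f.
Proof.
move=> m_gt0 _ _ _ T_rep w_anti a_anti wa_anti f_central.
split; apply: alpha_eq_rhs => //.
exact: gauged_anticomm.
Qed.
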